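(* Let $X_\sigma$ be the root monoid associated with a cone $\sigma$, a $k$-dimensional regular face $\tau$ with primitive ray generators $p_1,\ldots,p_k$, and a set of Demazure roots $\{e_1^{(r)},e_2^{(r)}\}_{r=1}^k$ compatible with $\tau$. Let $\gamma$ be a face of $\sigma$ and let $E_\gamma$ be the set of idempotents ($x*x=x$) lying in the orbit $O_\gamma$. Then: (1) if $\tau\subseteq\gamma$, then $E_\gamma=\{x_\gamma\}$; (2) if there exists $r\in\{1,\ldots,k\}$ with $p_r\notin\gamma$ such that either both $e_1^{(r)},e_2^{(r)}\notin\gamma^\perp$ or both $e_1^{(r)},e_2^{(r)}\in\gamma^\perp$, then $E_\gamma=\varnothing$; (3) if for every $r\in\{1,\ldots,k\}$ with $p_r\notin\gamma$ exactly one of $e_1^{(r)},e_2^{(r)}$ lies in $\gamma^\perp$, then $E_\gamma=\{x\in O_\gamma:\chi^u(x)=1\ \text{for all } u\in\operatorname{cone}(\tau,\gamma)^\perp\cap S_\sigma\}$.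
   Context: $\mathbb{K}$ algebraically closed of characteristic zero; $N$ a lattice, $M$ its dual, $\sigma\subseteq N_\mathbb{Q}$ a strongly convex rational polyhedral cone, $S_\sigma=\sigma^\vee\cap M$, $X_\sigma=\operatorname{Spec}\bigoplus_{u\in S_\sigma}\mathbb{K}\chi^u$; points of $X_\sigma$ are semigroup homomorphisms $S_\sigma\to(\mathbb{K},\cdot)$. For a face $\gamma$ of $\sigma$, $x_\gamma$ is the point with $\chi^u(x_\gamma)=1$ if $u\in\gamma^\perp$ and $0$ otherwise, and $O_\gamma$ is the torus orbit of $x_\gamma$, i.e. the set of points $x$ with $\chi^u(x)\ne0$ iff $u\in\gamma^\perp$. $\operatorname{cone}(\tau,\gamma)$ is the cone generated by $\tau$ and $\gamma$. Regular face: primitive ray generators are part of a basis of $N$. Demazure root for a ray generator $p_i$ of $\sigma$: $e\in M$ with $\langle p_i,e\rangle=-1$, $\langle p_j,e\rangle\ge0$ for the other ray generators $p_j$. Compatibility with $\tau$: $\langle p_s,e_1^{(r)}\rangle=\langle p_s,e_2^{(r)}\rangle=-\delta_{rs}$, $r,s=1,\ldots,k$. The root monoid is $X_\sigma$ with multiplication $*$ given by $\chi^u(x*y)=\sum_{\bar i+\bar j=\langle\bar p,u\rangle}\prod_{r}\binom{\langle p_r,u\rangle}{i_r}\chi^{u+\sum_ri_re_2^{(r)}}(x)\,\chi^{u+\sum_rj_re_1^{(r)}}(y)$, $u\in S_\sigma$, where $\langle\bar p,u\rangle=(\langle p_1,u\rangle,\ldots,\langle p_k,u\rangle)$ and $\bar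 i,\bar j\in\mathbb{Z}_{\ge0}^k$ (the dual of the comultiplication $\chi^u\mapsto\chi^u\otimes\chi^u\prod_r(1\otimes\chi^{e_1^{(r)}}+\chi^{e_2^{(r)}}\otimes1)^{\langle p_r,u\rangle}$). *)

From HB Require Import structures.
From mathcomp Require Import all_boot all_order all_algebra.
Set Implicit Arguments. Unset Strict Implicit. Unset Printing Implicit Defensive.
Import Order.TTheory GRing.Theory Num.Theory.
Local Open Scope ring_scope.

(* N = M = Z^n, realised as row vectors 'rV[int]_n; the duality pairing is
   the standard dot product. *)
Definition pairing (n : nat) (p u : 'rV[int]_n) : int :=
  \sum_(i < n) p ord0 i * u ord0 i.

Definition primitive (n : nat) (p : 'rV[int]_n) : Prop :=
  forall (c : nat) (v : 'rV[int]_n), p = v *~ (c%:Z) -> c = 1%N.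

(* sigma = cone(P 0, ..., P (m-1)) ; u in S_sigma = sigma^vee cap M *)
Definition inS (n m : nat) (P : 'I_m -> 'rV[int]_n) (u : 'rV[int]_n) : Prop :=
  forall j, 0 <= pairing (P j) u.

Definition strongly_convex (n m : nat) (P : 'I_m -> 'rV[int]_n) : Prop :=
  forall c : 'I_m -> nat, \sum_(j < m) P j *~ (c j)%:Z = 0 -> forall j, c j = 0%N.

(* A face of sigma = cone(P), represented by the set F of indices of the ray
   generators it contains: gamma = sigma cap w^perp for some w in sigma^vee
   (w may be taken integral), and then gamma = cone(P j : j in F). *)
Definition is_face (n m : nat) (P : 'I_m -> 'rV[int]_n) (F : {set 'I_m}) : Prop :=
  exists w : 'rV[int]_n, inS P w /\ forall j, (j \in F) <-> pairing (P j) w = 0.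

Definition ray_generators (n m : nat) (P : 'I_m -> 'rV[int]_n) : Prop :=
  (forall j, primitive (P j)) /\ (forall j, is_face P [set j]).

Definition in_perp (n m : nat) (P : 'I_m -> 'rV[int]_n) (F : {set 'I_m})
  (u : 'rV[int]_n) : bool :=
  [forall j in F, pairing (P j) u == 0].

(* tau = cone(P (t r) : r < k) is a regular face of sigma:
   its ray generators are part of a basis of N. *)
Definition regular_face (n m k : nat) (P : 'I_m -> 'rV[int]_n) (t : 'I_k -> 'I_m) : Prop :=
  injective t /\ is_face P [set t r | r : 'I_k] /\
  exists B : 'M[int]_n, B \in unitmx /\
    forall r : 'I_k, exists i : 'I_n, row i B = P (t r).

Definition demazure_root (n m : nat) (P : 'I_m -> 'rV[int]_n) (i : 'I_m) (e : 'rV[int]_n) : Prop :=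
  pairing (P i) e = -1 /\ forall j, j != i -> 0 <= pairing (P j) e.

Definition compatible (n m k : nat) (P : 'I_m -> 'rV[int]_n) (t : 'I_k -> 'I_m)
  (e1 e2 : 'I_k -> 'rV[int]_n) : Prop :=
  (forall r, demazure_root P (t r) (e1 r) /\ demazure_root P (t r) (e2 r)) /\
  forall r s : 'I_k, pairing (P (t s)) (e1 r) = - (r == s)%:R /\
                     pairing (P (t s)) (e2 r) = - (r == s)%:R.

(* Points of X_sigma: monoid homomorphisms S_sigma -> (K, * ), given as
   functions on M whose values outside S_sigma are irrelevant. *)
Definition is_point (K : fieldType) (n m : nat) (P : 'I_m -> 'rV[int]_n)
  (x : 'rV[int]_n -> K) : Prop :=
  x 0 = 1 /\ forall u v, inS P u -> inS P v -> x (u + v) = x u * x v.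

Definition eq_pt (K : fieldType) (n m : nat) (P : 'I_m -> 'rV[int]_n)
  (x y : 'rV[int]_n -> K) : Prop :=
  forall u, inS P u -> x u = y u.

Definition rm_mul (K : fieldType) (n m k : nat) (P : 'I_m -> 'rV[int]_n)
  (t : 'I_k -> 'I_m) (e1 e2 : 'I_k -> 'rV[int]_n) (x y : 'rV[int]_n -> K)
  (u : 'rV[int]_n) : K :=
  let a := fun r : 'I_k => `|pairing (P (t r)) u|%N in
  \sum_(i : {dffun forall r : 'I_k, 'I_(a r).+1})
    (\prod_(r < k) ('C(a r, i r))%:R) *
    x (u + \sum_(r < k) e2 r *~ (i r : nat)%:Z) *
    y (u + \sum_(r < k) e1 r *~ (a r - i r)%:Z).

Definition rm_idempotent (K : fieldType) (n m k : nat) (P : 'I_m -> 'rV[int]_n)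
  (t : 'I_k -> 'I_m) (e1 e2 : 'I_k -> 'rV[int]_n) (x : 'rV[int]_n -> K) : Prop :=
  eq_pt P (rm_mul P t e1 e2 x x) x.

Definition x_face (K : fieldType) (n m : nat) (P : 'I_m -> 'rV[int]_n)
  (F : {set 'I_m}) (u : 'rV[int]_n) : K :=
  if in_perp P F u then 1 else 0.

Definition in_orbitO (K : fieldType) (n m : nat) (P : 'I_m -> 'rV[int]_n)
  (F : {set 'I_m}) (x : 'rV[int]_n -> K) : Prop :=
  is_point P x /\ forall u, inS P u -> (x u != 0 <-> in_perp P F u).

From HB Require Import structures.
From mathcomp Require Import all_boot all_order all_algebra.
Set Implicit Arguments. Unset Strict Implicit. Unset Printing Implicit Defensive.
Import Order.TTheory GRing.Theory Num.Theory.
Local Open Scope ring_scope.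

(* Write a_r(u) = <p_r, u> for u in S_sigma.  The summand of chi^u(x * y) indexed
   by i evaluates x at u + sum_r i_r e_2^(r) and y at u + sum_r (a_r - i_r) e_1^(r);
   both points lie in S_sigma and add up to b + u, where the "balance"
   b = u + sum_r i_r e_2^(r) + sum_r (a_r - i_r) e_1^(r) lies in S_sigma and is
   orthogonal to p_1, ..., p_k.  For x in O_gamma the summand of (x * x)(u) is thus
   x(b) x(u): it vanishes off gamma^perp, and also whenever it moves along a root
   e_j^(r) outside gamma^perp with p_r not in gamma, since some ray of gamma pairs
   positively with that root.  On cone(tau, gamma)^perp only i = 0 occurs, so an
   idempotent equals 1 there.
   (3) If exactly one root of each such r lies in gamma^perp, a single summand
   survives, and its balance lies in cone(tau, gamma)^perp; (1) is the case where
   no r is involved.  (2) If both roots of some r leave gamma^perp, every summand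
   vanishes at a relative interior point of gamma^perp; if both stay in gamma^perp,
   then at a point u of gamma^perp with a(u) = delta_r the two summands give
   (x * x)(u) = 2 x(u) <> x(u). *)

Fact pairing_is_zmod_morphism n (p : 'rV[int]_n) : zmod_morphism (pairing p).
Proof.
by move=> u v; rewrite /pairing -sumrB; apply: eq_bigr => i _; rewrite !mxE mulrBr.
Qed.

HB.instance Definition _ n (p : 'rV[int]_n) :=
  GRing.isZmodMorphism.Build 'rV[int]_n int (pairing p) (pairing_is_zmod_morphism p).

Lemma in_perpP n m (P : 'I_m -> 'rV[int]_n) (F : {set 'I_m}) u :
  reflect (forall j, j \in F -> pairing (P j) u = 0) (in_perp P F u).
Proof. by apply: (iffP forall_inP) => h j /h /eqP. Qed.

Lemma in_perpU n m (P : 'I_m -> 'rV[int]_n) (A B : {set 'I_m}) u :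
  in_perp P (A :|: B) u = in_perp P A u && in_perp P B u.
Proof.
apply/in_perpP/andP => [h | [/in_perpP hA /in_perpP hB] j].
  by split; apply/in_perpP => j hj; apply: h; rewrite inE hj ?orbT.
by rewrite inE => /orP[/hA | /hB].
Qed.

Lemma in_perpD n m (P : 'I_m -> 'rV[int]_n) (F : {set 'I_m}) u v : inS P u -> inS P v ->
  in_perp P F (u + v) = in_perp P F u && in_perp P F v.
Proof.
move=> hu hv; apply/in_perpP/andP => [h | [/in_perpP hu0 /in_perpP hv0] j hj].
  by split; apply/in_perpP => j /h; rewrite raddfD /= => /eqP;
    rewrite paddr_eq0 ?hu ?hv // => /andP[/eqP ? /eqP ?].
by rewrite raddfD /= hu0 ?hv0 ?addr0.
Qed.

Lemma x_face_orbit (K : fieldType) n m (P : 'I_m -> 'rV[int]_n) (F : {set 'I_m}) :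
  in_orbitO P F (x_face K P F).
Proof.
have perp0 : in_perp P F 0 by apply/in_perpP => j _; rewrite raddf0.
split; first split.
- by rewrite /x_face perp0.
- move=> u v hu hv; rewrite /x_face in_perpD //.
  by case: (in_perp P F u); case: (in_perp P F v); rewrite /= ?mul1r ?mul0r.
- by move=> u _; rewrite /x_face; case: ifP; rewrite ?oner_eq0 ?eqxx.
Qed.

Section BinomialSums.
Variables (R : pzSemiRingType) (k : nat) (a : 'I_k -> nat).

Local Notation index := {dffun forall r : 'I_k, 'I_(a r).+1}.

Definition mbinom_sum (g : ('I_k -> nat) -> R) : R :=
  \sum_(i : index) (\prod_(r < k) ('C(a r, i r))%:R) * g (fun r => i r).

Let index_of (c : 'I_k -> nat) : index := [ffun r => inord (c r)].

Let index_ofE c r : (c r <= a r)%N -> index_of c r = c r :> nat.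
Proof. by move=> hc; rewrite ffunE inordK. Qed.

Let index_inj (i j : index) : (forall r, i r = j r :> nat) -> i = j.
Proof. by move=> h; apply/ffunP => r; apply/val_inj/h. Qed.

Variable g : ('I_k -> nat) -> R.
Hypothesis g_ext : forall c c', c =1 c' -> g c = g c'.

Lemma mbinom_sum_eq0 : (forall i, (forall r, (i r <= a r)%N) -> g i = 0) -> mbinom_sum g = 0.
Proof.
by move=> hg; rewrite /mbinom_sum big1 // => i _; rewrite hg ?mulr0 // => r; rewrite -ltnS.
Qed.

Lemma mbinom_sum_single c : (forall r, (c r <= a r)%N) ->
  (forall i, (forall r, (i r <= a r)%N) -> (exists r, i r != c r) -> g i = 0) ->
  mbinom_sum g = (\prod_(r < k) ('C(a r, c r))%:R) * g c.
Proof.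
move=> hc hg; rewrite /mbinom_sum (bigD1 (index_of c)) //= [X in _ + X]big1 ?addr0.
  by congr (_ * _); [apply: eq_bigr => r _ | apply: g_ext => r]; rewrite index_ofE.
move=> i hi; rewrite hg ?mulr0 // => [r | ]; first by rewrite -ltnS.
apply/existsP; apply: contraNT hi; rewrite negb_exists => /forallP hic.
by apply/eqP/index_inj => r; rewrite index_ofE //; apply/eqP/negbNE.
Qed.

Lemma mbinom_sum_delta s : (forall r, a r = (r == s) :> nat) ->
  mbinom_sum g = g (fun=> 0%N) + g (fun r => (r == s) : nat).
Proof.
move=> ha; pose i0 := index_of (fun=> 0%N); pose i1 := index_of (fun r => (r == s) : nat).
have i0E r : i0 r = 0%N :> nat by rewrite index_ofE.
have i1E r : i1 r = (r == s) :> nat by rewrite index_ofE ?ha.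
have iE (i : index) r : r != s -> i r = 0%N :> nat.
  move=> hrs; have := ltn_ord (i r).
  by rewrite [X in (_ < X.+1)%N]ha (negbTE hrs) ltnS leqn0 => /eqP.
have i01 : i1 != i0.
  by apply/eqP => /(congr1 (fun i : index => i s : nat)); rewrite i0E i1E eqxx.
have index01 (i : index) : i = i0 \/ i = i1.
  have := ltn_ord (i s); rewrite [X in (_ < X.+1)%N]ha eqxx ltnS leq_eqVlt ltnS leqn0.
  case/orP=> /eqP his; [right | left]; apply: index_inj => r;
    by case: (eqVneq r s) => [-> | hrs]; rewrite ?i0E ?i1E ?eqxx ?his // iE ?(negbTE hrs).
rewrite /mbinom_sum (bigD1 i0) // (bigD1 i1) ?i01 //= [X in _ + (_ + X)]big1 ?addr0; last first.
  by move=> i /andP[]; case: (index01 i) => ->; rewrite eqxx ?andbF.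
congr (_ + _); rewrite big1 ?mul1r; do ?[by apply: g_ext => r; rewrite ?i0E ?i1E].
  by move=> r _; rewrite i0E bin0.
by move=> r _; rewrite i1E ha binn.
Qed.

End BinomialSums.

Section RootMonoid.
Variables (n m k : nat) (P : 'I_m -> 'rV[int]_n) (t : 'I_k -> 'I_m).

Local Notation tau := [set t r | r : 'I_k].

Lemma in_perp_tauP u :
  reflect (forall s, pairing (P (t s)) u = 0) (in_perp P tau u).
Proof.
apply: (iffP (in_perpP _ _ _)) => [h s | h _ /imsetP[s _ ->] //].
by apply: h; rewrite imset_f.
Qed.

Lemma inS_tau_split v :
  (forall s, 0 <= pairing (P (t s)) v) ->
  (forall j, j \notin tau -> 0 <= pairing (P j) v) -> inS P v.
Proof. by move=> ht hj j; case: (boolP (j \in tau)) => [/imsetP[s _ ->] | /hj]. Qed.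

Definition tau_degree (u : 'rV[int]_n) (r : 'I_k) : nat := `|pairing (P (t r)) u|%N.

Lemma tau_degreeE u r : inS P u -> (tau_degree u r)%:Z = pairing (P (t r)) u.
Proof. by move=> hu; rewrite /tau_degree gez0_abs. Qed.

Definition root_comb (e : 'I_k -> 'rV[int]_n) (c : 'I_k -> nat) : 'rV[int]_n :=
  \sum_(r < k) e r *~ (c r)%:Z.

Lemma eq_root_comb e c c' : c =1 c' -> root_comb e c = root_comb e c'.
Proof. by move=> h; apply: eq_bigr => r _; rewrite h. Qed.

Lemma root_comb0 e : root_comb e (fun=> 0%N) = 0.
Proof. by rewrite /root_comb big1 // => r _; rewrite mulr0z. Qed.

Lemma pairing_root_comb p e c :
  pairing p (root_comb e c) = \sum_(r < k) (c r)%:Z * pairing p (e r).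
Proof. by rewrite raddf_sum; apply: eq_bigr => r _; rewrite raddfMz mulrzz mulrC. Qed.

Definition tau_roots (e : 'I_k -> 'rV[int]_n) : Prop :=
  (forall r, demazure_root P (t r) (e r)) /\
  forall r s, pairing (P (t s)) (e r) = - (r == s)%:R.

Section TauRoots.
Variable e : 'I_k -> 'rV[int]_n.
Hypothesis he : tau_roots e.

Lemma pairing_tau_root_comb s c : pairing (P (t s)) (root_comb e c) = - (c s)%:Z.
Proof.
rewrite pairing_root_comb (bigD1 s) //= he.2 eqxx mulrN1 big1 ?addr0 // => r /negbTE hr.
by rewrite he.2 hr oppr0 mulr0.
Qed.

Lemma pairing_root_ge0 j r : j \notin tau -> 0 <= pairing (P j) (e r).
Proof.
move=> hj; apply: (he.1 r).2; apply: contraNneq hj => ->; exact: imset_f.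
Qed.

Lemma pairing_root_comb_ge0 j c : j \notin tau -> 0 <= pairing (P j) (root_comb e c).
Proof.
by move=> hj; rewrite pairing_root_comb sumr_ge0 // => r _; rewrite mulr_ge0 ?pairing_root_ge0.
Qed.

Lemma pairing_root_comb_ge j c r : j \notin tau ->
  (c r)%:Z * pairing (P j) (e r) <= pairing (P j) (root_comb e c).
Proof.
move=> hj; rewrite pairing_root_comb (bigD1 r) //= lerDl sumr_ge0 // => s _.
by rewrite mulr_ge0 ?pairing_root_ge0.
Qed.

Lemma inS_add_root_comb u c : inS P u -> (forall r, (c r <= tau_degree u r)%N) ->
  inS P (u + root_comb e c).
Proof.
move=> hu hc; apply: inS_tau_split => [s | j hj]; rewrite raddfD /=.
  by rewrite pairing_tau_root_comb -tau_degreeE // subr_ge0 lez_nat.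
by rewrite addr_ge0 ?pairing_root_comb_ge0.
Qed.

Lemma root_not_perp_witness (F : {set 'I_m}) s :
  t s \notin F -> ~~ in_perp P F (e s) ->
  exists2 j, j \in F & j \notin tau /\ 0 < pairing (P j) (e s).
Proof.
move=> hts /forall_inPn[j hjF hne]; have hj : j \notin tau.
  apply: contra hne => /imsetP[r _ ej]; rewrite ej he.2 oppr_eq0 pnatr_eq0 eqb0.
  by apply: contraNneq hts => ->; rewrite -ej.
by exists j => //; split; rewrite // lt_def hne pairing_root_ge0.
Qed.

End TauRoots.

Lemma face_witness (F : {set 'I_m}) : is_face P F ->
  exists2 w, inS P w & in_perp P F w /\ forall s, t s \notin F -> (0 < tau_degree w s)%N.
Proof.
move=> [w [hw hF]]; exists w => //; split; first by apply/in_perpP => j /hF.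
by move=> s hs; rewrite absz_gt0; apply: contra hs => /eqP /hF.
Qed.

Section Orbit.
Variables (K : fieldType) (F : {set 'I_m}) (x : 'rV[int]_n -> K).
Hypothesis hx : in_orbitO P F x.

Lemma orbit_neq0 v : inS P v -> in_perp P F v -> x v != 0.
Proof. by move=> hv /(hx.2 v hv). Qed.

Lemma orbit_eq0 v : inS P v -> ~~ in_perp P F v -> x v = 0.
Proof. by move=> hv; apply: contraNeq => /(hx.2 v hv). Qed.

Lemma orbit_root_comb_eq0 e u c s : tau_roots e -> inS P u ->
  (forall r, (c r <= tau_degree u r)%N) -> (0 < c s)%N ->
  t s \notin F -> ~~ in_perp P F (e s) -> x (u + root_comb e c) = 0.
Proof.
move=> he hu hc hcs hts hes; have [j hjF [hj hjs]] := root_not_perp_witness he hts hes.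
have hpos : 0 < pairing (P j) (u + root_comb e c).
  rewrite raddfD /= ltr_wpDl ?hu //; apply: lt_le_trans (pairing_root_comb_ge he c s hj).
  by rewrite mulr_gt0 // ltz_nat.
apply: orbit_eq0; first exact: inS_add_root_comb.
by apply: contraTN hpos => /in_perpP /(_ j hjF) ->; rewrite ltxx.
Qed.

End Orbit.

Section Product.
Variables e1 e2 : 'I_k -> 'rV[int]_n.
Hypotheses (he1 : tau_roots e1) (he2 : tau_roots e2).

Definition rm_term (K : fieldType) (x y : 'rV[int]_n -> K) u (i : 'I_k -> nat) : K :=
  x (u + root_comb e2 i) * y (u + root_comb e1 (fun r => (tau_degree u r - i r)%N)).

Lemma rm_mulE (K : fieldType) (x y : 'rV[int]_n -> K) u :
  rm_mul P t e1 e2 x y u = mbinom_sum (tau_degree u) (rm_term x y u).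
Proof. by apply: eq_bigr => i _; rewrite mulrA. Qed.

Lemma rm_term_ext (K : fieldType) (x y : 'rV[int]_n -> K) u c c' :
  c =1 c' -> rm_term x y u c = rm_term x y u c'.
Proof.
move=> h; rewrite /rm_term (eq_root_comb _ h).
by rewrite (eq_root_comb e1 (c' := fun r => (tau_degree u r - c' r)%N)) // => r; rewrite h.
Qed.

Definition balance u (i : 'I_k -> nat) : 'rV[int]_n :=
  u + root_comb e2 i + root_comb e1 (fun r => (tau_degree u r - i r)%N).

Lemma pairing_tau_balance u i s : inS P u -> (i s <= tau_degree u s)%N ->
  pairing (P (t s)) (balance u i) = 0.
Proof.
move=> hu hi; rewrite !raddfD /= !pairing_tau_root_comb // -tau_degreeE //.
by rewrite subzn // subrr.
Qed.

Lemma inS_balance u i : inS P u -> (forall r, (i r <= tau_degree u r)%N) ->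
  inS P (balance u i).
Proof.
move=> hu hi; apply: inS_tau_split => [s | j hj]; first by rewrite pairing_tau_balance.
by rewrite !raddfD /= !addr_ge0 ?hu ?pairing_root_comb_ge0.
Qed.

Lemma balance_perp (F : {set 'I_m}) u i : inS P u -> in_perp P F u ->
  (forall r, (i r <= tau_degree u r)%N) ->
  (forall r, (0 < i r)%N -> in_perp P F (e2 r)) ->
  (forall r, (i r < tau_degree u r)%N -> in_perp P F (e1 r)) ->
  in_perp P (F :|: tau) (balance u i).
Proof.
move=> hu /in_perpP huF hi hi2 hi1; rewrite in_perpU; apply/andP; split.
  apply/in_perpP => j hj; rewrite !raddfD /= huF // add0r !pairing_root_comb.
  rewrite !big1 ?addr0 // => r _.
    case: (ltnP (i r) (tau_degree u r)) => [/hi1 /in_perpP -> //|]; first by rewrite mulr0.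
    by rewrite -subn_eq0 => /eqP ->; rewrite mul0r.
  by case: (posnP (i r)) => [-> | /hi2 /in_perpP -> //]; rewrite ?mul0r ?mulr0.
by apply/in_perp_tauP => s; rewrite pairing_tau_balance.
Qed.

Lemma rm_term_balance (K : fieldType) (x : 'rV[int]_n -> K) u i :
  is_point P x -> inS P u -> (forall r, (i r <= tau_degree u r)%N) ->
  rm_term x x u i = x (balance u i) * x u.
Proof.
move=> [_ xD] hu hi; have hub := inS_balance hu hi.
have hu2 := inS_add_root_comb he2 hu hi.
have hu1 := inS_add_root_comb he1 hu (fun r => leq_subr (i r) (tau_degree u r)).
by rewrite /rm_term -xD // -xD // /balance addrA (addrAC _ u).
Qed.

Section Idempotents.
Variables (K : fieldType) (F : {set 'I_m}) (x : 'rV[int]_n -> K).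
Hypothesis hx : in_orbitO P F x.

Lemma rm_term_eq0 u i r :
  inS P u -> (forall r, (i r <= tau_degree u r)%N) -> t r \notin F ->
  (0 < i r)%N && ~~ in_perp P F (e2 r) ||
    (i r < tau_degree u r)%N && ~~ in_perp P F (e1 r) ->
  rm_term x x u i = 0.
Proof.
move=> hu hi hr /orP[/andP[hir he2r] | /andP[hir he1r]]; rewrite /rm_term.
  by rewrite (orbit_root_comb_eq0 hx he2 hu hi hir) ?mul0r.
have hi' s : (tau_degree u s - i s <= tau_degree u s)%N by apply: leq_subr.
by rewrite (orbit_root_comb_eq0 hx he1 hu hi' _ hr he1r) ?mulr0 ?subn_gt0.
Qed.

Lemma rm_mul_orbit_eq0 u : inS P u -> ~~ in_perp P F u -> rm_mul P t e1 e2 x x u = 0.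
Proof.
move=> hu hnp; rewrite rm_mulE mbinom_sum_eq0 // => i hi.
by rewrite (rm_term_balance hx.1) // (orbit_eq0 hx hu hnp) mulr0.
Qed.

Lemma rm_idempotent_eq1 u : rm_idempotent P t e1 e2 x -> inS P u ->
  in_perp P (F :|: tau) u -> x u = 1.
Proof.
move=> hid hu; rewrite in_perpU => /andP[huF /in_perp_tauP hut].
have deg0 r : tau_degree u r = 0%N by rewrite /tau_degree hut.
have := hid u hu; rewrite rm_mulE (mbinom_sum_single (rm_term_ext x x u) (c := fun=> 0%N)) //;
  last by move=> i hi [r]; have := hi r; rewrite deg0 leqn0 => /eqP ->.
rewrite big1 ?mul1r => [|r _]; last by rewrite bin0.
rewrite (rm_term_balance hx.1) // /balance root_comb0 addr0.
rewrite (eq_root_comb _ (c' := fun=> 0%N)) => [|r]; last by rewrite deg0.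
by rewrite root_comb0 addr0 -{3}[x u]mulr1 => /(mulfI (orbit_neq0 hx hu huF)).
Qed.

Lemma rm_idempotent_iff_xor :
  (forall r, t r \notin F -> in_perp P F (e1 r) (+) in_perp P F (e2 r)) ->
  rm_idempotent P t e1 e2 x <->
  forall u, inS P u -> in_perp P (F :|: tau) u -> x u = 1.
Proof.
move=> hxor; split=> [hid u | h1 u hu]; first exact: rm_idempotent_eq1.
have [huF | hnuF] := boolP (in_perp P F u); last by rewrite rm_mul_orbit_eq0 ?(orbit_eq0 hx).
have /in_perpP huF0 := huF.
have deg0 r : t r \in F -> tau_degree u r = 0%N by move=> /huF0 hr; rewrite /tau_degree hr.
pose c r := if in_perp P F (e2 r) then tau_degree u r else 0%N.
have hc r : (c r <= tau_degree u r)%N by rewrite /c; case: ifP.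
rewrite rm_mulE (mbinom_sum_single (rm_term_ext x x u) (c := c)) //.
  rewrite big1 ?mul1r => [|r _]; last by rewrite /c; case: ifP; rewrite ?binn ?bin0.
  rewrite (rm_term_balance hx.1) // h1 ?mul1r //; first exact: inS_balance.
  apply: balance_perp => // r; rewrite /c; case: ifP => // he2r; rewrite ?ltnn // => hpos.
  have htr : t r \notin F by apply: contraTN hpos => /deg0 ->.
  by move: (hxor r htr); rewrite he2r addbF.
move=> i hi [r hir]; have htr : t r \notin F.
  by apply: contra hir => /deg0 hr0; move: (hi r); rewrite /c hr0 leqn0 => /eqP ->; case: ifP.
apply: (rm_term_eq0 hu hi htr); move: (hxor r htr) hir; rewrite /c.
case: ifP => he2r; rewrite ?addbT ?addbF => he1r hir.
  by rewrite andbF /= ltn_neqAle hir hi he1r.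
by rewrite lt0n hir.
Qed.

Lemma not_idempotent_roots_notin_perp s : is_face P F -> t s \notin F ->
  ~~ in_perp P F (e1 s) -> ~~ in_perp P F (e2 s) -> ~ rm_idempotent P t e1 e2 x.
Proof.
move=> /face_witness[w hw [hwF hwpos]] hts he1s he2s hid.
suff : rm_mul P t e1 e2 x x w = 0.
  by rewrite hid // => /eqP; apply/negP/(orbit_neq0 hx hw hwF).
rewrite rm_mulE mbinom_sum_eq0 // => i hi; apply: (rm_term_eq0 hw hi hts).
by case: (posnP (i s)) => [-> | _]; rewrite ?(hwpos s hts) he1s he2s ?orbT.
Qed.

Lemma not_idempotent_roots_in_perp r : is_face P F -> t r \notin F ->
  in_perp P F (e1 r) -> in_perp P F (e2 r) ->
  (forall s, t s \notin F -> in_perp P F (e1 s) || in_perp P F (e2 s)) ->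
  ~ rm_idempotent P t e1 e2 x.
Proof.
move=> /face_witness[w hw [/in_perpP hwF hwpos]] htr he1r he2r hsel hid.
pose f s := if in_perp P F (e1 s) then e1 s else e2 s.
have hf : tau_roots f.
  by split=> [s | s s']; rewrite /f; case: ifP => _;
    [apply: he1.1 | apply: he2.1 | apply: he1.2 | apply: he2.2].
pose c s := (tau_degree w s - (s == r))%N.
pose u := w + root_comb f c.
have hu : inS P u by apply: inS_add_root_comb => // s; apply: leq_subr.
have degu s : tau_degree u s = (s == r) :> nat.
  have hsr : ((s == r) <= tau_degree w s)%N by case: eqP => [-> |]; [apply: hwpos | ].
  apply/eqP; rewrite -eqz_nat tau_degreeE // raddfD /= pairing_tau_root_comb // -tau_degreeE //.
  by rewrite subzn ?leq_subr // subKn.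
have huF : in_perp P F u.
  apply/in_perpP => j hj; rewrite raddfD /= hwF // add0r pairing_root_comb big1 // => s _.
  have [hts | hts] := boolP (t s \in F); first by rewrite /c /tau_degree hwF //= sub0n mul0r.
  suff /in_perpP -> : in_perp P F (f s) by rewrite ?mulr0.
  by rewrite /f; case: ifP => // /negbT he1s; move: (hsel s hts); rewrite (negbTE he1s).
have pos_r s : (0 < tau_degree u s)%N -> s = r by rewrite degu; case: eqP.
have bal1 i : (forall s, (i s <= tau_degree u s)%N) -> x (balance u i) = 1.
  move=> hi; apply: (rm_idempotent_eq1 hid); first exact: inS_balance.
  apply: balance_perp => // s his.
    by rewrite (pos_r s (leq_trans his (hi s))).
  by rewrite (pos_r s (leq_ltn_trans (leq0n _) his)).
have le0 s : (0 <= tau_degree u s)%N := leq0n _.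
have le_delta s : ((s == r) <= tau_degree u s)%N by rewrite degu.
have := hid u hu; rewrite rm_mulE (mbinom_sum_delta (rm_term_ext x x u) degu).
rewrite !(rm_term_balance hx.1) // !bal1 // mul1r => /eqP.
by rewrite -subr_eq0 addrK (negbTE (orbit_neq0 hx hu huF)).
Qed.

Lemma not_idempotent_roots_perp_eq r : is_face P F -> t r \notin F ->
  in_perp P F (e1 r) = in_perp P F (e2 r) -> ~ rm_idempotent P t e1 e2 x.
Proof.
move=> hF htr he12.
have [s /and3P[hts he1s he2s] | hnone] :=
  pickP (fun s => [&& t s \notin F, ~~ in_perp P F (e1 s) & ~~ in_perp P F (e2 s)]).
  exact: not_idempotent_roots_notin_perp hF hts he1s he2s.
have hsel s : t s \notin F -> in_perp P F (e1 s) || in_perp P F (e2 s).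
  by move=> hts; have := hnone s; rewrite /= hts -negb_or => /negbFE.
have := hsel r htr; rewrite -he12 orbb => he1r.
have he2r : in_perp P F (e2 r) by rewrite -he12.
exact: not_idempotent_roots_in_perp hF htr he1r he2r hsel.
Qed.

End Idempotents.
End Product.
End RootMonoid.

Theorem mainTheorem6
  (K : closedFieldType) (hK : [pchar K] =i pred0)
  (n m k : nat) (P : 'I_m -> 'rV[int]_n)
  (hP : ray_generators P) (hsc : strongly_convex P)
  (t : 'I_k -> 'I_m) (htau : regular_face P t)
  (e1 e2 : 'I_k -> 'rV[int]_n) (he : compatible P t e1 e2)
  (F : {set 'I_m}) (hF : is_face P F) :
  (* (1) tau subset gamma  ==>  E_gamma = {x_gamma} *)
  ((forall r, t r \in F) ->
     in_orbitO P F (x_face K P F) /\ rm_idempotent P t e1 e2 (x_face K P F) /\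
     forall x : 'rV[int]_n -> K, in_orbitO P F x -> rm_idempotent P t e1 e2 x ->
       eq_pt P x (x_face K P F)) /\
  (* (2) ==> E_gamma empty *)
  ((exists r, t r \notin F /\
      ((~~ in_perp P F (e1 r) /\ ~~ in_perp P F (e2 r)) \/
       (in_perp P F (e1 r) /\ in_perp P F (e2 r)))) ->
     forall x : 'rV[int]_n -> K, in_orbitO P F x -> ~ rm_idempotent P t e1 e2 x) /\
  (* (3) ==> E_gamma = {x in O_gamma | chi^u(x) = 1 on cone(tau,gamma)^perp cap S} *)
  ((forall r, t r \notin F -> (in_perp P F (e1 r) (+) in_perp P F (e2 r))) ->
     forall x : 'rV[int]_n -> K, in_orbitO P F x ->
       (rm_idempotent P t e1 e2 x <->
        forall u, inS P u -> in_perp P (F :|: [set t r | r : 'I_k]) u -> x u = 1)).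
Proof.
have [hd hc] := he.
have he1 : tau_roots P t e1 by split=> [r | r s]; [exact: (hd r).1 | exact: (hc r s).1].
have he2 : tau_roots P t e2 by split=> [r | r s]; [exact: (hd r).2 | exact: (hc r s).2].
split; [|split].
- move=> htauF.
  have hxor r : t r \notin F -> in_perp P F (e1 r) (+) in_perp P F (e2 r) by rewrite htauF.
  have hperp u : in_perp P (F :|: [set t r | r : 'I_k]) u = in_perp P F u.
    rewrite in_perpU; apply/andb_idr => /in_perpP huF.
    by apply/in_perpP => _ /imsetP[r _ ->]; apply: huF.
  have hface := x_face_orbit K P F.
  split=> //; split.
    by apply: (rm_idempotent_iff_xor he1 he2 hface hxor).2 => u _; rewrite hperp /x_face => ->.
  move=> x hx hid u hu; rewrite /x_face; case: ifP => huF.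
    by apply: (rm_idempotent_eq1 he1 he2 hx hid hu); rewrite hperp.
  by rewrite (orbit_eq0 hx hu) ?huF.
- move=> [r [htr hcase]] x hx; apply: (not_idempotent_roots_perp_eq he1 he2 hx hF htr).
  by case: hcase => [[/negbTE -> /negbTE ->] | [-> ->]].
- move=> hxor x hx; exact: rm_idempotent_iff_xor.
Qed.
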